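(* Let $G=\mathrm{SL}(2,\mathbb{C})$. For $i=1,2,3$ let $\mathbf{a}_i\in G$ with $\mathrm{tr}(\mathbf{a}_i)=t_i$, put $\overline{\mathbf{a}}_i=\mathbf{a}_i-(t_i/2)\mathbf{e}$ and $s_{ij}=\mathrm{tr}(\overline{\mathbf{a}}_i\overline{\mathbf{a}}_j)$, and let $S=(s_{ij})_{i,j=1}^3$. (i) The matrices $\overline{\mathbf{a}}_1,\overline{\mathbf{a}}_2,\overline{\mathbf{a}}_3$ are linearly independent (over $\mathbb{C}$) if and only if $\det(S)\neq 0$. (ii) Suppose $\det(S)\neq0$. Let $s_{14},s_{24},s_{34},t_4\in\mathbb{C}$ be given, and set $s_{44}=\tfrac12 t_4^2-2$ and $s_{4i}=s_{i4}$ for $i=1,2,3$. Then there exists $\mathbf{a}_4\in G$ with $\mathrm{tr}(\mathbf{a}_4)=t_4$ and $\mathrm{tr}(\overline{\mathbf{a}}_i\overline{\mathbf{a}}_4)=s_{i4}$ for $1\le i\le 3$, where $\overline{\mathbf{a}}_4=\mathbf{a}_4-(t_4/2)\mathbf{e}$, if and only if $\det\big((s_{ij})_{i,j=1}^4\big)=0$.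
   Context: $\mathbf{e}$ denotes the $2\times2$ identity matrix. *)

From HB Require Import structures.
From mathcomp Require Import all_boot all_order all_algebra.
From mathcomp Require Import complex.
From mathcomp Require Import Rstruct.
Set Implicit Arguments. Unset Strict Implicit. Unset Printing Implicit Defensive.
Import Order.TTheory GRing.Theory Num.Theory.
Local Open Scope ring_scope.

Notation C := (complex Rdefinitions.R).

Definition abar (a : 'M[C]_2) : 'M[C]_2 :=
  a - (\tr a / 2)%:M.

Definition Smat (a : 'I_3 -> 'M[C]_2) : 'M[C]_3 :=
  \matrix_(i < 3, j < 3) \tr (abar (a i) *m abar (a j)).

Definition S4mat (a : 'I_3 -> 'M[C]_2)
    (u : 'I_3 -> C) (t4 : C)
    : 'M[C]_(3 + 1) :=
  block_mx (Smat a) (\col_i u i) (\row_j u j) ((t4 ^+ 2 / 2 - 2)%:M).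

From HB Require Import structures.
From mathcomp Require Import all_boot all_order all_algebra.
From mathcomp Require Import complex.
From mathcomp Require Import Rstruct.
From mathcomp Require Import ring.
Set Implicit Arguments. Unset Strict Implicit. Unset Printing Implicit Defensive.
Import Order.TTheory GRing.Theory Num.Theory.
Local Open Scope ring_scope.

(* A traceless 2x2 matrix X is determined by its coordinates (X00, X01, X10),
   in which the trace pairing tr (X Y) has a Gram matrix Q of determinant -2.
   Hence S = A Q A^T for the coordinate matrix A of the abar_i, and
   det S = -2 det(A)^2, which gives (i).  For (ii), A Q is invertible, so the
   s_i4 are the pairings of the abar_i with a unique traceless Y, and
   factoring the bordered matrix gives det (s_ij)_(i,j<=4) = det S (s_44 - tr (Y^2)).
   Finally a_4 := Y + (t_4/2) e has trace t_4 and tr (Y^2) = t_4^2/2 - 2 det a_4,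
   so det a_4 = 1 exactly when tr (Y^2) = s_44. *)

Lemma big_ord2 (V : nmodType) (F : 'I_2 -> V) : \sum_(i < 2) F i = F 0 + F 1.
Proof. by rewrite !big_ord_recl big_ord0 addr0; congr (F _ + F _); apply: val_inj. Qed.

Lemma big_ord3 (V : nmodType) (F : 'I_3 -> V) : \sum_(i < 3) F i = F 0 + F 1 + F 2.
Proof.
by rewrite !big_ord_recl big_ord0 addr0 addrA; congr (F _ + F _ + F _); apply: val_inj.
Qed.

Lemma det_block_gram (R : comPzRingType) n k
    (A Q : 'M[R]_n) (B : 'M[R]_(k, n)) (D : 'M[R]_k) :
  \det (block_mx (A *m Q *m A^T) (A *m Q *m B^T) (B *m Q *m A^T) D)
  = \det (A *m Q *m A^T) * \det (D - B *m Q *m B^T).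
Proof.
have -> : block_mx (A *m Q *m A^T) (A *m Q *m B^T) (B *m Q *m A^T) D =
    block_mx A 0 B 1%:M *m block_mx (Q *m A^T) (Q *m B^T) 0 (D - B *m Q *m B^T).
  rewrite mulmx_block !mulmx0 !mul0mx !addr0 mul1mx !mulmxA.
  by rewrite [B *m Q *m B^T + _]addrC subrK.
rewrite det_mulmx det_lblock det_ublock det1 !det_mulmx; ring.
Qed.

Section TracelessCoordinates.
Variable R : comPzRingType.
Implicit Types (M N X Y : 'M[R]_2) (x : 'rV[R]_3).

Lemma mxtrace_mx22 M : \tr M = M 0 0 + M 1 1.
Proof. exact: big_ord2. Qed.

Lemma det_mx22 M : \det M = M 0 0 * M 1 1 - M 0 1 * M 1 0.
Proof.
rewrite (expand_det_row _ 0) big_ord2 /cofactor !det_mx11 !mxE /=.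
rewrite expr0 expr1 mul1r mulN1r mulrN.
by congr (M _ _ * M _ _ - M _ _ * M _ _); apply: val_inj.
Qed.

Lemma mxtrace_mulmx22 M N :
  \tr (M *m N) = M 0 0 * N 0 0 + M 0 1 * N 1 0 + M 1 0 * N 0 1 + M 1 1 * N 1 1.
Proof. by rewrite mxtrace_mx22 !mxE !big_ord2 addrA. Qed.

Lemma traceless_mx22 M : \tr M = 0 -> M 1 1 = - M 0 0.
Proof. by rewrite mxtrace_mx22 addrC => /eqP; rewrite addr_eq0 => /eqP. Qed.

Definition sl2_coords X : 'rV[R]_3 := \row_j [:: X 0 0; X 0 1; X 1 0]`_j.

Definition sl2_of_coords x : 'M[R]_2 :=
  \matrix_(i, j) (nth [::] [:: [:: x 0 0; x 0 1]; [:: x 0 2; - x 0 0]] i)`_j.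

Fact sl2_coords_is_linear : linear sl2_coords.
Proof.
move=> c X Y; apply/rowP => j.
by rewrite !mxE; case: j => -[|[|[|//]]] _ /=; rewrite ?mxE.
Qed.

HB.instance Definition _ :=
  GRing.isLinear.Build R 'M[R]_2 'rV[R]_3 _ sl2_coords sl2_coords_is_linear.

Lemma mxtrace_sl2_of_coords x : \tr (sl2_of_coords x) = 0.
Proof. by rewrite mxtrace_mx22 !mxE /= subrr. Qed.

Lemma sl2_of_coordsK : cancel sl2_of_coords sl2_coords.
Proof.
move=> x; apply/rowP => -[[|[|[|//]]] ?]; rewrite !mxE /=.
all: by congr (x 0 _); apply: val_inj.
Qed.

Lemma sl2_coordsK X : \tr X = 0 -> sl2_of_coords (sl2_coords X) = X.
Proof.
move=> /traceless_mx22 X11.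
apply/matrixP => -[[|[|//]] ?] [[|[|//]] ?]; rewrite !mxE /= -?X11.
all: by congr (X _ _); apply: val_inj.
Qed.

Lemma sl2_coords_inj X Y :
  \tr X = 0 -> \tr Y = 0 -> sl2_coords X = sl2_coords Y -> X = Y.
Proof. by move=> trX trY eqXY; rewrite -(sl2_coordsK trX) eqXY sl2_coordsK. Qed.

(* The Gram matrix of the trace pairing (X, Y) |-> tr (X Y) on traceless
   matrices, in the coordinates of [sl2_coords]. *)
Definition trace_form : 'M[R]_3 :=
  \matrix_(i, j) (nth [::] [:: [:: 2; 0; 0]; [:: 0; 0; 1]; [:: 0; 1; 0]] i)`_j.

Lemma det_trace_form : \det trace_form = -2.
Proof.
by rewrite (expand_det_row _ 0) big_ord3 /cofactor det_mx22 !mxE /=; ring.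
Qed.

Definition coordmx m (X : 'I_m -> 'M[R]_2) : 'M[R]_(m, 3) :=
  \matrix_(i, j) sl2_coords (X i) 0 j.

Lemma coordmx_const1 X : coordmx (fun _ : 'I_1 => X) = sl2_coords X.
Proof. by apply/matrixP => i j; rewrite (ord1 i) !mxE. Qed.

Lemma mxtrace_gram m n (X : 'I_m -> 'M[R]_2) (Y : 'I_n -> 'M[R]_2) :
    (forall i, \tr (X i) = 0) -> (forall j, \tr (Y j) = 0) ->
  \matrix_(i, j) \tr (X i *m Y j) = coordmx X *m trace_form *m (coordmx Y)^T.
Proof.
move=> trX trY; apply/matrixP => i j.
rewrite mxE mxtrace_mulmx22 !traceless_mx22 // !(mxE, big_ord3) /=.
ring.
Qed.

End TracelessCoordinates.

Arguments trace_form {R}.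

Section TracelessField.
Variable F : fieldType.
Implicit Types (X : 'I_3 -> 'M[F]_2).

Lemma free_traceless_coordmx X : (forall i, \tr (X i) = 0) ->
  free [seq X i | i <- enum 'I_3] = (coordmx X \in unitmx).
Proof.
move=> trX.
have coords_comb k : sl2_coords (\sum_(i < 3) k i *: X i) = \row_i k i *m coordmx X.
  rewrite linear_sum; apply/rowP => j; rewrite !mxE summxE.
  by apply: eq_bigr => i _; rewrite linearZ !mxE.
have tr_comb k : \tr (\sum_(i < 3) k i *: X i) = 0.
  by rewrite linear_sum big1 // => i _; rewrite linearZ /= trX mulr0.
have -> : [seq X i | i <- enum 'I_3] = [tuple X i | i < 3] :> seq _ by [].
apply/freeP/idP => [freeX | unitX k comb0 i].
  rewrite unitmxE unitfE; apply/negP => /det0P[v /negP nz_v vX0]; apply: nz_v.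
  apply/eqP/rowP => i; rewrite mxE; apply: (freeX (fun i => v 0 i)).
  under eq_bigr do rewrite nth_mktuple.
  apply: sl2_coords_inj; rewrite ?tr_comb ?linear0 //.
  by rewrite coords_comb -vX0; congr (_ *m _); apply/rowP => j; rewrite mxE.
move: comb0; under eq_bigr do rewrite nth_mktuple; move=> comb0.
have : \row_i k i *m coordmx X == 0 by rewrite -coords_comb comb0 linear0.
by rewrite mulmx_free_eq0 ?row_free_unit // => /eqP/rowP/(_ i); rewrite !mxE.
Qed.

Lemma exists_traceless_mxtrace_mul X (u : 'I_3 -> F) :
    (2 : F) != 0 -> (forall i, \tr (X i) = 0) -> coordmx X \in unitmx ->
  exists2 Y : 'M[F]_2, \tr Y = 0 & forall i, \tr (X i *m Y) = u i.
Proof.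
move=> two_neq0 trX unitX.
have unitXQ : coordmx X *m trace_form \in unitmx.
  by rewrite unitmx_mul unitX unitmxE det_trace_form unitfE oppr_eq0.
pose y := (invmx (coordmx X *m trace_form) *m \col_i u i)^T.
exists (sl2_of_coords y) => [|i]; first exact: mxtrace_sl2_of_coords.
have trY (j : 'I_1) : \tr (sl2_of_coords y) = 0 by exact: mxtrace_sl2_of_coords.
move/matrixP/(_ i 0): (mxtrace_gram trX trY).
by rewrite coordmx_const1 sl2_of_coordsK trmxK mulKVmx // !mxE.
Qed.

End TracelessField.

Lemma two_neq0 : (2 : C) != 0.
Proof. by rewrite pnatr_eq0. Qed.

Lemma mxtrace_abar a : \tr (abar a) = 0.
Proof. by rewrite /abar linearB /= mxtrace_scalar mulr2n -splitr subrr. Qed.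

Lemma mxtrace_add_half_scalar (X : 'M[C]_2) t :
  \tr X = 0 -> \tr (X + (t / 2)%:M) = t.
Proof. by move=> trX; rewrite mxtraceD trX add0r mxtrace_scalar mulr2n -splitr. Qed.

Lemma abar_add_half_scalar (X : 'M[C]_2) t :
  \tr X = 0 -> abar (X + (t / 2)%:M) = X.
Proof. by move=> trX; rewrite /abar mxtrace_add_half_scalar // addrK. Qed.

Lemma mxtrace_abar_sqr a : \tr (abar a *m abar a) = \tr a ^+ 2 / 2 - 2 * \det a.
Proof.
rewrite mxtrace_mulmx22 det_mx22 /abar mxtrace_mx22 !mxE /= mulr1n !mulr0n !subr0.
by field.
Qed.

Lemma Smat_gram a : let X i := abar (a i) in
  Smat a = coordmx X *m trace_form *m (coordmx X)^T.
Proof. exact: mxtrace_gram (fun i => mxtrace_abar (a i)) (fun i => mxtrace_abar (a i)). Qed.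

Lemma det_S4mat a u t4 (Y : 'M[C]_2) :
    \tr Y = 0 -> (forall i, \tr (abar (a i) *m Y) = u i) ->
  \det (S4mat a u t4) = \det (Smat a) * (t4 ^+ 2 / 2 - 2 - \tr (Y *m Y)).
Proof.
move=> trY uE.
pose X i := abar (a i); pose Y1 (j : 'I_1) := Y.
have trX i : \tr (X i) = 0 := mxtrace_abar (a i).
have trY1 j : \tr (Y1 j) = 0 := trY.
have colE : \col_i u i = coordmx X *m trace_form *m (coordmx Y1)^T.
  by rewrite -(mxtrace_gram trX trY1); apply/matrixP => i j; rewrite !mxE uE.
have rowE : \row_j u j = coordmx Y1 *m trace_form *m (coordmx X)^T.
  by rewrite -(mxtrace_gram trY1 trX); apply/matrixP => i j; rewrite !mxE mxtrace_mulC uE.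
rewrite /S4mat colE rowE Smat_gram det_block_gram -(mxtrace_gram trY1 trY1) det_mx11 !mxE.
by rewrite mulr1n.
Qed.

Theorem mainTheorem1 (a : 'I_3 -> 'M[C]_2) (ha : forall i, \det (a i) = 1) :
  (free [seq abar (a i) | i <- enum 'I_3] <-> \det (Smat a) != 0) /\
  (\det (Smat a) != 0 ->
   forall (u : 'I_3 -> C) (t4 : C),
     (exists a4 : 'M[C]_2,
        [/\ \det a4 = 1, \tr a4 = t4 &
            forall i : 'I_3, \tr (abar (a i) *m abar a4) = u i])
     <-> \det (S4mat a u t4) = 0).
Proof.
pose X i := abar (a i).
have trX i : \tr (X i) = 0 := mxtrace_abar (a i).
have detS : \det (Smat a) = - 2 * \det (coordmx X) ^+ 2.
  by rewrite Smat_gram !det_mulmx det_tr det_trace_form; ring.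
have S_neq0 : (\det (Smat a) != 0) = (coordmx X \in unitmx).
  by rewrite detS unitmxE unitfE mulf_eq0 oppr_eq0 (negbTE two_neq0) expf_eq0.
split; first by rewrite S_neq0 -(free_traceless_coordmx trX).
move=> S0 u t4; split => [[a4 [det1 tr4 uE]] | S4_0].
  by rewrite (det_S4mat t4 (mxtrace_abar a4) uE) mxtrace_abar_sqr det1 tr4 mulr1 subrr mulr0.
have unitX : coordmx X \in unitmx by rewrite -S_neq0.
have [Y trY uE] := exists_traceless_mxtrace_mul u two_neq0 trX unitX.
have YY : \tr (Y *m Y) = t4 ^+ 2 / 2 - 2.
  move: S4_0; rewrite (det_S4mat t4 trY uE) => /eqP.
  by rewrite mulf_eq0 (negbTE S0) subr_eq0 => /eqP.
exists (Y + (t4 / 2)%:M); rewrite abar_add_half_scalar // mxtrace_add_half_scalar //.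
split => //; have := mxtrace_abar_sqr (Y + (t4 / 2)%:M).
rewrite abar_add_half_scalar // mxtrace_add_half_scalar // YY => /addrI/oppr_inj.
by rewrite -{1}[2]mulr1 => /(mulfI two_neq0).
Qed.
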